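(* Let $m,n\ge 2$ and $p,q\ge 0$ be integers, and let $\bm{i}=(i_1,\dots,i_p),\bm{k}=(k_1,\dots,k_p)\in\{1,\dots,m\}^{\times p}$ and $\bm{j}=(j_1,\dots,j_q),\bm{l}=(l_1,\dots,l_q)\in\{1,\dots,n\}^{\times q}$. For each $\sigma\in\mathfrak{S}_{p+q}$, $$\sum_{s_1,\dots,s_q=1}^m\delta_\sigma(\bm{i}\cup\bm{s},\bm{k}\cup\bm{s})=\delta_{\mathrm{pr}_1(\sigma)}(\bm{i},\bm{k})\,m^{\kappa_1(\sigma)},\qquad \sum_{t_1,\dots,t_p=1}^n\delta_\sigma(\bm{t}\cup\bm{j},\bm{t}\cup\bm{l})=\delta_{\mathrm{pr}_2(\sigma)}(\bm{j},\bm{l})\,n^{\kappa_2(\sigma)}.$$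
   Context: $\bm{i}\cup\bm{s}$ denotes the concatenated sequence $(i_1,\dots,i_p,s_1,\dots,s_q)$ of length $p+q$, and similarly for $\bm{k}\cup\bm{s}$, $\bm{t}\cup\bm{j}=(t_1,\dots,t_p,j_1,\dots,j_q)$, $\bm{t}\cup\bm{l}$. For $\sigma\in\mathfrak{S}_d$ and sequences $\bm{a},\bm{b}$ of length $d$, $\delta_\sigma(\bm{a},\bm{b})=\prod_{r=1}^d\delta(a_{\sigma(r)},b_r)$ (Kronecker delta). For $\sigma\in\mathfrak{S}_{p+q}$: $\mathrm{pr}_1(\sigma)\in\mathfrak{S}_p$ is obtained by writing $\sigma$ as a product of disjoint cycles and erasing the letters $p+1,\dots,p+q$ from each cycle; $\mathrm{pr}_2(\sigma)\in\mathfrak{S}_q$ is obtained by erasing the letters $1,\dots,p$ from each cycle and relabeling $p+1,\dots,p+q$ as $1,\dots,q$. $\kappa_1(\sigma)$ is the number of cycles of $\sigma$ whose support is contained in $\{p+1,\dots,p+q\}$, and $\kappa_2(\sigma)$ the number of cycles whose support is contained in $\{1,\dots,p\}$. *)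

(* Indices are 0-based: {1..m} is 'I_m, the letters
   1..p of S_(p+q) are the ordinals < p, and p+1..p+q are those >= p. *)
From mathcomp Require Import all_boot all_order all_fingroup.
Set Implicit Arguments. Unset Strict Implicit. Unset Printing Implicit Defensive.

Definition delta_perm (d : nat) (T : eqType) (s : 'S_d) (a b : 'I_d -> T) : nat :=
  \prod_(r < d) (a (s r) == b r).

(* delta for a general self-map of 'I_d (used for pr1/pr2, which are
   permutations but are given here as plain functions) *)
Definition delta_fun (d : nat) (T : eqType) (f : 'I_d -> 'I_d) (a b : 'I_d -> T) : nat :=
  \prod_(r < d) (a (f r) == b r).

Definition concat (p q : nat) (T : Type) (a : 'I_p -> T) (b : 'I_q -> T)
  (r : 'I_(p + q)) : T :=
  match split r with inl x => a x | inr y => b y end.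

Fixpoint walk (d : nat) (s : 'S_d) (P : pred 'I_d) (fuel : nat) (z : 'I_d) : 'I_d :=
  match fuel with
  | 0 => z
  | fuel'.+1 => let z' := s z in if P z' then z' else walk s P fuel' z'
  end.

(* pr1(sigma): erase letters p..p+q-1 from the cycles of sigma, i.e. map x
   to the next element of its cycle that lies in {0..p-1} *)
Definition pr1 (p q : nat) (s : 'S_(p + q)) (x : 'I_p) : 'I_p :=
  insubd x (val (walk s (fun r : 'I_(p + q) => val r < p) (p + q) (lshift q x))).

(* pr2(sigma): erase letters 0..p-1 and relabel p+j as j *)
Definition pr2 (p q : nat) (s : 'S_(p + q)) (y : 'I_q) : 'I_q :=
  insubd y (val (walk s (fun r : 'I_(p + q) => p <= val r) (p + q) (rshift p y)) - p).

Definition kappa1 (p q : nat) (s : 'S_(p + q)) : nat :=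
  #|[set C in porbits s | C \subset [set r : 'I_(p + q) | p <= val r]]|.

Definition kappa2 (p q : nat) (s : 'S_(p + q)) : nat :=
  #|[set C in porbits s | C \subset [set r : 'I_(p + q) | val r < p]]|.

(* Call the letters of the summed block free and the others fixed.  A term of
   the sum is 1 exactly when the value read at s r equals the value written at
   r for every r.  Along a cycle of s this forces each free value to be copied
   from the last fixed letter before it, and the value written at a fixed
   letter x to reappear at the next fixed letter of its cycle, which is
   pr(s)(x): this is the delta factor.  On a cycle made only of free letters
   the constraints just say the values are constant, so each such cycle (there
   are kappa(s) of them) contributes one free choice of a letter. *)

From mathcomp Require Import all_boot all_order all_fingroup.
Set Implicit Arguments. Unset Strict Implicit. Unset Printing Implicit Defensive.

Lemma prod_nat_of_bool (I : finType) (P : pred I) (b : I -> bool) :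
  \prod_(i | P i) (b i : nat) = [forall (i | P i), b i].
Proof.
have morph_bool : {morph nat_of_bool : x y / x && y >-> (x * y)%N}.
  by move=> x y; rewrite mulnb.
by rewrite -(big_morph _ morph_bool (erefl (nat_of_bool true))) big_andE.
Qed.

Lemma sum_nat_of_bool (I : finType) (b : I -> bool) :
  \sum_i (b i : nat) = #|[set i | b i]|.
Proof.
by rewrite -sum1_card [RHS]big_mkcond; apply: eq_bigr => i _; rewrite inE; case: (b i).
Qed.

Section FirstHit.
Variables (d : nat) (s : 'S_d) (P : pred 'I_d).

Definition first_hit (z : 'I_d) (n : nat) :=
  [/\ 0 < n, P (iter n s z) & forall j, 0 < j < n -> ~~ P (iter j s z)].

Lemma walk_first_hit fuel z n : n <= fuel -> first_hit z n -> walk s P fuel z = iter n s z.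
Proof.
elim: fuel z n => [|fuel IH] z [|[|n]] // le_n [] // _ Pn minn; first by rewrite /= Pn.
have Psz : P (s z) = false by apply/negbTE/(minn 1).
rewrite [LHS]/= Psz iterSr; apply: IH => //; split=> //; first by rewrite -iterSr.
by move=> j /andP [j_gt0 lt_jn]; rewrite -iterSr; apply: minn; rewrite ltnS.
Qed.

Lemma walk_step fuel z : 0 < fuel -> P (s z) -> walk s P fuel z = s z.
Proof. by case: fuel => //= fuel _ ->. Qed.

Lemma first_hit_exists z n : 0 < n -> P (iter n s z) -> exists2 k, k <= n & first_hit z k.
Proof.
move=> n_gt0 Pn; have hit : exists k, (0 < k) && P (iter k s z) by exists n; rewrite n_gt0.
case: (ex_minnP hit) => k /andP [k_gt0 Pk] mink.
exists k; first by apply: mink; rewrite n_gt0.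
split=> // j /andP [j_gt0 lt_jk]; apply: contraTN lt_jk => Pj.
by rewrite -leqNgt mink ?j_gt0.
Qed.

End FirstHit.

Section PermIter.
Variables (d : nat) (s : 'S_d).

Lemma iter_iterV j a x : j <= a -> iter j s (iter a (s^-1)%g x) = iter (a - j) (s^-1)%g x.
Proof.
elim: j => [|j IH] le_ja; first by rewrite subn0.
have [k def_k] : exists k, a - j = k.+1 by exists (a - j.+1); rewrite subnSK.
by rewrite iterS IH 1?ltnW // def_k iterS permKV subnS def_k.
Qed.

Lemma porbitS x : porbit s (s x) = porbit s x.
Proof. by have := porbit_perm s 1 x; rewrite expg1. Qed.

Lemma mem_porbit_iter n z : iter n s z \in porbit s z.
Proof. by rewrite -permX mem_porbit. Qed.

Lemma porbit_iterP z x : x \in porbit s z -> exists2 i, i < d & x = iter i s z.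
Proof.
rewrite porbit_traject => /trajectP [i lt_i ->]; exists i => //.
by apply: leq_trans lt_i _; have := max_card (porbit s z); rewrite card_ord.
Qed.

End PermIter.

Section CycleCount.
Variables (d : nat) (s : 'S_d) (fixed free : pred 'I_d).
Hypothesis freeE : forall r, free r = ~~ fixed r.
Variables (J T : finType) (t0 : T) (e : J -> 'I_d).
Hypotheses (free_e : forall y, free (e y))
  (free_codom : forall r, free r -> exists y, r = e y).
Variables (A B : 'I_d -> T) (G H : {ffun J -> T} -> 'I_d -> T).
Hypotheses (G_free : forall f y, G f (e y) = f y) (H_free : forall f y, H f (e y) = f y).
Hypotheses (G_fixed : forall f r, fixed r -> G f r = A r)
  (H_fixed : forall f r, fixed r -> H f r = B r).

Local Notation si := (s^-1)%g.

Definition next_fixed x := walk s fixed d x.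
Definition prev_fixed z := walk si fixed d z.
Definition free_cycle z := porbit s z \subset [set r | free r].
Definition free_cycles := [set C in porbits s | C \subset [set r | free r]].
Definition is_solution (f : {ffun J -> T}) := [forall r, G f (s r) == H f r].
Definition compatible := [forall x, fixed x ==> (A (next_fixed x) == B x)].

Lemma G_eq_H f r : ~~ fixed r -> G f r = H f r.
Proof. by rewrite -freeE => /free_codom [y ->]; rewrite G_free H_free. Qed.

Lemma not_free_cycle z x : x \in porbit s z -> fixed x -> ~~ free_cycle z.
Proof. by move=> xz fixed_x; apply/subsetPn; exists x; rewrite // inE freeE fixed_x. Qed.

Lemma free_cycle_iter z n : free_cycle z -> ~~ fixed (iter n s z).
Proof. by move/subsetP/(_ _ (mem_porbit_iter s n z)); rewrite inE freeE. Qed.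

Lemma next_fixed_spec x : fixed x ->
  exists n, [/\ n <= d, next_fixed x = iter n s x & first_hit s fixed x n].
Proof.
move=> fixed_x; have: si x \in porbit s x by rewrite -porbitV (mem_porbit_iter _ 1).
case/porbit_iterP=> i lt_id def_x.
have [|n le_ni hit] := @first_hit_exists d s fixed x i.+1 isT.
  by rewrite iterS -def_x permKV.
have le_nd := leq_trans le_ni lt_id.
by exists n; split=> //; apply: walk_first_hit hit.
Qed.

Lemma prev_fixed_spec z : free z -> ~~ free_cycle z ->
  exists a, [/\ a < d, prev_fixed z = iter a si z & first_hit si fixed z a].
Proof.
move=> free_z /subsetPn [x]; rewrite -porbitV inE freeE negbK.
move=> /porbit_iterP [i lt_id ->] fixed_x.
have [|a le_ai hit] := @first_hit_exists d si fixed z i _ fixed_x.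
  by case: i fixed_x {lt_id} => //=; rewrite -[fixed z]negbK -freeE free_z.
have lt_ad := leq_ltn_trans le_ai lt_id.
by exists a; split=> //; apply: walk_first_hit hit; apply: ltnW.
Qed.

Lemma next_fixed_step r : fixed (s r) -> next_fixed r = s r.
Proof. exact: walk_step (leq_ltn_trans (leq0n r) (ltn_ord r)). Qed.

Lemma prev_fixed_step r : fixed r -> prev_fixed (s r) = r.
Proof.
move=> fixed_r; rewrite -{2}(permK s r).
by apply: walk_step (leq_ltn_trans (leq0n r) (ltn_ord r)) _; rewrite permK.
Qed.

Lemma prev_fixed_free r : free r -> ~~ free_cycle r -> prev_fixed (s r) = prev_fixed r.
Proof.
move=> free_r /(prev_fixed_spec free_r) [a [lt_ad -> [_ fixed_a min_a]]].
rewrite /prev_fixed (@walk_first_hit _ _ _ _ _ a.+1) ?iterSr ?permK //.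
split=> //; first by rewrite iterSr permK.
case=> // j /andP [_ lt_ja]; rewrite iterSr permK.
by case: j lt_ja => [|j] lt_ja; [rewrite -freeE | apply: min_a].
Qed.

Lemma next_prev_fixed r : free r -> fixed (s r) -> next_fixed (prev_fixed r) = s r.
Proof.
move=> free_r fixed_sr.
have [a [lt_ad -> [_ _ min_a]]] :=
  prev_fixed_spec free_r (not_free_cycle (mem_porbit_iter s 1 r) fixed_sr).
have iter_a : iter a.+1 s (iter a si r) = s r by rewrite iterS iter_iterV ?subnn.
rewrite /next_fixed (@walk_first_hit _ _ _ _ _ a.+1) //; split; rewrite ?iter_a //.
move=> j /andP [j_gt0]; rewrite ltnS => le_ja; rewrite iter_iterV //.
have [-> | aj_gt0] := posnP (a - j); first by rewrite -freeE.
by apply: min_a; rewrite aj_gt0 ltn_subrL j_gt0 (leq_trans j_gt0 le_ja).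
Qed.

Lemma fixed_next_fixed x : fixed x -> fixed (next_fixed x).
Proof. by case/next_fixed_spec=> n [_ -> []]. Qed.

Lemma fixed_prev_fixed z : free z -> ~~ free_cycle z -> fixed (prev_fixed z).
Proof. by move=> free_z /(prev_fixed_spec free_z) [a [_ -> []]]. Qed.

Section Solutions.
Variables (f : {ffun J -> T}) (sol : is_solution f).

Lemma solution_iter z n : 0 < n -> (forall j, 0 < j < n -> ~~ fixed (iter j s z)) ->
  G f (iter n s z) = H f z.
Proof.
move/forallP: sol => sol_f; elim: n => // [[|n] IH] _ min_n; first exact: (eqP (sol_f z)).
rewrite iterS (eqP (sol_f _)) -G_eq_H; last by apply: min_n; rewrite ltnSn.
by apply: IH => // j /andP [j_gt0 lt_jn]; rewrite min_n // j_gt0 ltnW.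
Qed.

Lemma solution_iterV z n : 0 < n -> (forall j, 0 < j < n -> ~~ fixed (iter j si z)) ->
  H f (iter n si z) = G f z.
Proof.
have HV w : H f (si w) = G f w by move/forallP/(_ (si w))/eqP: sol; rewrite permKV.
elim: n => // [[|n] IH] _ min_n; first exact: HV.
rewrite iterS HV G_eq_H; last by apply: min_n; rewrite ltnSn.
by apply: IH => // j /andP [j_gt0 lt_jn]; rewrite min_n // j_gt0 ltnW.
Qed.

Lemma solution_compatible : compatible.
Proof.
apply/forallP => x; apply/implyP => fixed_x.
have [n [_ def_n [n_gt0 fixed_n min_n]]] := next_fixed_spec fixed_x.
by rewrite def_n -(G_fixed f fixed_n) -(H_fixed f fixed_x) solution_iter.
Qed.

Lemma solution_prev_fixed z : free z -> ~~ free_cycle z -> G f z = B (prev_fixed z).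
Proof.
move=> free_z /(prev_fixed_spec free_z) [a [_ -> [a_gt0 fixed_a min_a]]].
by rewrite -(H_fixed f fixed_a) solution_iterV.
Qed.

Lemma solution_free_cycle z n : free_cycle z -> G f (iter n s z) = G f z.
Proof.
move=> cyc_z; have [-> // | n_gt0] := posnP n.
have free_iter j : ~~ fixed (iter j s z) by apply: free_cycle_iter.
by rewrite (solution_iter n_gt0 (fun j _ => free_iter j)) (G_eq_H _ (free_iter 0)).
Qed.

End Solutions.

Definition free_cycle_type := {C : {set 'I_d} | C \in free_cycles}.

Definition cycle_value (h : {ffun free_cycle_type -> T}) (C : {set 'I_d}) : T :=
  odflt t0 (omap h (insub C)).

Definition fill h z := if free_cycle z then cycle_value h (porbit s z) else B (prev_fixed z).

Definition solution_of h : {ffun J -> T} := [ffun y => fill h (e y)].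

Definition cycle_values (f : {ffun J -> T}) : {ffun free_cycle_type -> T} :=
  [ffun C : free_cycle_type => odflt t0 (omap f [pick y | e y \in val C])].

Lemma solution_of_free h z : free z ->
  G (solution_of h) z = fill h z /\ H (solution_of h) z = fill h z.
Proof. by case/free_codom=> y ->; rewrite G_free H_free ffunE. Qed.

Lemma fill_step h r : free r -> fill h (s r) = fill h r.
Proof.
rewrite /fill /free_cycle porbitS => free_r.
by case: ifPn => // not_cyc; rewrite prev_fixed_free.
Qed.

Lemma solution_of_is_solution h : compatible -> is_solution (solution_of h).
Proof.
move=> /forallP compat; apply/forallP => r; apply/eqP.
have compat_x x : fixed x -> A (next_fixed x) = B x by move=> ?; apply/eqP/(implyP (compat x)).
have fixedVfree x : fixed x || free x by rewrite freeE orbN.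
case/orP: (fixedVfree r) => [fixed_r | free_r];
  case/orP: (fixedVfree (s r)) => [fixed_sr | free_sr].
- by rewrite G_fixed // H_fixed // -(next_fixed_step fixed_sr) compat_x.
- rewrite (solution_of_free h free_sr).1 H_fixed // /fill.
  have r_in : r \in porbit s (s r) by rewrite porbitS porbit_id.
  by rewrite (negbTE (not_free_cycle r_in fixed_r)) prev_fixed_step.
- rewrite G_fixed // (solution_of_free h free_r).2 /fill.
  have not_cyc := not_free_cycle (mem_porbit_iter s 1 r) fixed_sr.
  by rewrite (negbTE not_cyc) -(next_prev_fixed free_r fixed_sr) compat_x ?fixed_prev_fixed.
- by rewrite (solution_of_free h free_sr).1 (solution_of_free h free_r).2 fill_step.
Qed.

Lemma solution_ofK f : is_solution f -> solution_of (cycle_values f) = f.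
Proof.
move=> sol; apply/ffunP => y; rewrite ffunE /fill.
case: ifPn => [cyc | not_cyc]; last by rewrite -(solution_prev_fixed sol) ?G_free.
have cyc_in : porbit s (e y) \in free_cycles by rewrite inE imset_f.
rewrite /cycle_value insubT /= ffunE /=.
case: pickP => [y' /porbit_iterP [n _ def_y'] | /(_ y)]; last by rewrite porbit_id.
by rewrite /= -(G_free f y') def_y' (solution_free_cycle sol) // G_free.
Qed.

Lemma solution_of_inj : injective solution_of.
Proof.
move=> h1 h2 eq_h; apply/ffunP => C; have := valP C.
rewrite inE => /andP [/imsetP [x _ def_C] C_free].
have /free_codom [y def_x] : free x.
  by move/subsetP/(_ x): C_free; rewrite def_C porbit_id inE; apply.
have cyc : free_cycle (e y) by rewrite /free_cycle -def_x -def_C.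
by move/ffunP/(_ y): eq_h; rewrite !ffunE /fill cyc /cycle_value -def_x -def_C valK.
Qed.

Lemma card_solutions :
  #|[set f | is_solution f]| = if compatible then #|T| ^ #|free_cycles| else 0.
Proof.
case: ifPn => [compat | not_compat]; last first.
  by apply: eq_card0 => f; rewrite inE; apply: contraNF not_compat; apply: solution_compatible.
have -> : [set f | is_solution f] = solution_of @: setT.
  apply/setP => f; rewrite inE; apply/idP/imsetP => [sol | [h _ ->]].
    by exists (cycle_values f); rewrite ?inE ?solution_ofK.
  exact: solution_of_is_solution.
by rewrite card_imset ?cardsT ?card_ffun ?card_sig //; apply: solution_of_inj.
Qed.

Lemma sum_prod_eq_perm :
  \sum_(f : {ffun J -> T}) \prod_(r < d) (G f (s r) == H f r)
    = (\prod_(x < d | fixed x) (A (next_fixed x) == B x)) * #|T| ^ #|free_cycles|.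
Proof.
under eq_bigr => f _ do rewrite (prod_nat_of_bool xpredT).
rewrite sum_nat_of_bool card_solutions prod_nat_of_bool.
by rewrite /compatible; case: ifP; rewrite ?mul1n.
Qed.

End CycleCount.

Section Concat.
Variables (p q : nat) (T : Type).

Lemma concat_lshift (a : 'I_p -> T) (b : 'I_q -> T) x : concat a b (lshift q x) = a x.
Proof.
by rewrite /concat; case: split_ordP => [x' /lshift_inj -> | y /eqP]; rewrite ?eq_lrshift.
Qed.

Lemma concat_rshift (a : 'I_p -> T) (b : 'I_q -> T) y : concat a b (rshift p y) = b y.
Proof.
by rewrite /concat; case: split_ordP => [x /eqP | y' /rshift_inj ->]; rewrite ?eq_rlshift.
Qed.

Lemma concat_ltn (a : 'I_p -> T) (b : 'I_q -> T) (r : 'I_(p + q)) x0 :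
  r < p -> concat a b r = a (insubd x0 (val r)).
Proof.
rewrite /concat; case: splitP => [x def_r _ | //].
by congr a; apply: val_inj; rewrite val_insubd /= def_r ltn_ord.
Qed.

Lemma concat_geq (a : 'I_p -> T) (b : 'I_q -> T) (r : 'I_(p + q)) y0 :
  p <= r -> concat a b r = b (insubd y0 (val r - p)).
Proof.
rewrite /concat; case: splitP => [x def_r | y def_r _]; first by rewrite def_r leqNgt ltn_ord.
by congr b; apply: val_inj; rewrite val_insubd /= def_r addKn ltn_ord.
Qed.

Lemma concat_ltn_eq (a : 'I_p -> T) (b b' : 'I_q -> T) (r : 'I_(p + q)) :
  r < p -> concat a b r = concat a b' r.
Proof. by rewrite /concat; case: splitP. Qed.

Lemma concat_geq_eq (a a' : 'I_p -> T) (b : 'I_q -> T) (r : 'I_(p + q)) :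
  p <= r -> concat a b r = concat a' b r.
Proof. by rewrite /concat; case: splitP => // x def_r; rewrite def_r leqNgt ltn_ord. Qed.

End Concat.

Lemma sum_delta_perm_concat_r p q (T : finType) (t0 : T) (a b : 'I_p -> T) (s : 'S_(p + q)) :
  \sum_(f : {ffun 'I_q -> T}) delta_perm s (concat a f) (concat b f)
    = delta_fun (pr1 s) a b * #|T| ^ kappa1 s.
Proof.
have free_codom (r : 'I_(p + q)) : p <= r -> exists y, r = rshift p y.
  by case: (split_ordP r) => [x -> | y ->]; [rewrite /= leqNgt ltn_ord | exists y].
rewrite (@sum_prod_eq_perm _ s (fun r => r < p) (fun r => p <= r) (fun r => leqNgt p r)
  _ _ t0 (@rshift p q) (fun y => leq_addr y p) free_codom
  (concat a (fun _ => t0)) (concat b (fun _ => t0)) (fun f => concat a f) (fun f => concat b f)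
  (fun f => concat_rshift a f) (fun f => concat_rshift b f)
  (fun f => concat_ltn_eq a f _) (fun f => concat_ltn_eq b f _)).
rewrite big_split_ord /= [X in _ * X * _]big_pred0 => [|y]; last by rewrite ltnNge leq_addr.
rewrite muln1 /delta_fun; congr (_ * _); apply: eq_big => [x | x _]; first exact: ltn_ord.
have fixed_next := @fixed_next_fixed _ s (fun r => r < p) (lshift q x) (ltn_ord x).
by rewrite concat_lshift (concat_ltn _ _ x fixed_next).
Qed.

Lemma sum_delta_perm_concat_l p q (T : finType) (t0 : T) (a b : 'I_q -> T) (s : 'S_(p + q)) :
  \sum_(f : {ffun 'I_p -> T}) delta_perm s (concat f a) (concat f b)
    = delta_fun (pr2 s) a b * #|T| ^ kappa2 s.
Proof.
have free_codom (r : 'I_(p + q)) : r < p -> exists x, r = lshift q x.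
  by case: (split_ordP r) => [x -> _ | //]; exists x.
rewrite (@sum_prod_eq_perm _ s (fun r => p <= r) (fun r => r < p) (fun r => ltnNge r p)
  _ _ t0 (@lshift p q) (fun x => ltn_ord x) free_codom
  (concat (fun _ => t0) a) (concat (fun _ => t0) b) (fun f => concat f a) (fun f => concat f b)
  (fun f => concat_lshift f a) (fun f => concat_lshift f b)
  (fun f => concat_geq_eq f _ a) (fun f => concat_geq_eq f _ b)).
rewrite big_split_ord /= [X in X * _ * _]big_pred0 => [|x]; last by rewrite leqNgt ltn_ord.
rewrite mul1n /delta_fun; congr (_ * _); apply: eq_big => [y | y _]; first exact: leq_addr.
have fixed_next := @fixed_next_fixed _ s (fun r => p <= r) (rshift p y) (leq_addr y p).
by rewrite concat_rshift (concat_geq _ _ y fixed_next).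
Qed.

Theorem lemma2p4 (m n p q : nat) (hm : 2 <= m) (hn : 2 <= n)
  (i k : 'I_p -> 'I_m) (j l : 'I_q -> 'I_n) (s : 'S_(p + q)) :
  \sum_(ss : {ffun 'I_q -> 'I_m}) delta_perm s (concat i ss) (concat k ss)
    = delta_fun (pr1 s) i k * m ^ kappa1 s
  /\
  \sum_(t : {ffun 'I_p -> 'I_n}) delta_perm s (concat t j) (concat t l)
    = delta_fun (pr2 s) j l * n ^ kappa2 s.
Proof.
split.
- by rewrite (sum_delta_perm_concat_r (Ordinal (ltnW hm))) card_ord.
- by rewrite (sum_delta_perm_concat_l (Ordinal (ltnW hn))) card_ord.
Qed.
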